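(* Let $X,X',Y,Y'$ be slices, $S:X\to X'$ and $T:Y\to Y'$ morphisms of $\mathsf{Slice}$. Define, for each slice $Z$, maps $(S\wedge Y)_Z:(X\wedge Y)(Z)\to(X'\wedge Y)(Z)$, $C\mapsto C\cap S$, and $(X\wedge T)_Z:(X\wedge Y)(Z)\to(X\wedge Y')(Z)$, $C\mapsto C\cap T$ (and analogously $(S\wedge Y')_Z$, $(X'\wedge T)_Z$). Then $(S\wedge Y)$ and $(X\wedge T)$ are natural transformations of presheaves on $\mathsf{Slice}$, and for every slice $Z$, $(S\wedge Y')_Z\circ(X\wedge T)_Z=(X'\wedge T)_Z\circ(S\wedge Y)_Z$.
   Context: Fix a connected, time-orientable Lorentzian manifold $\mathcal{M}$ with a fixed time-orientation (no further causality assumptions). A causal curve is an equivalence class, up to monotone reparametrisation, of smooth regular paths $\mu:\iota\to\mathcal{M}$ ($\iota\subseteq\mathbb{R}$ an interval) whose tangent is everywhere timelike or null; it is future-directed if the tangent is everywhere future-directed. Write $x\prec y$ if $x=y$ or there is a future-directed causal curve from $x$ to $y$. A region $A\subseteq\mathcal{M}$ is spacelike if no two distinct points $x,y\in A$ satisfy $x\prec y$. A slice is a closed spacelike subset of $\mathcal{M}$. For regions $A,B$, $\mathcal{C}[A,B]$ is the set of future-directed causal curves passing through $A$ and then $B$: for a representative path $\mu:\iota\to\mathcal{M}$, there exists $q\in\iota$ with $\mu(q)\in B$, and for every such $q$ there exists $p\le q$ with $\mu(p)\in A$. The category $\mathsf{Slice}$ has slices as objects, $\mathsf{Slice}(X,Y)=\mathcal{P}(\mathcal{C}[X,Y])$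 (the powerset), composition $T\circ S:=T\cap S$, identities $1_X=\mathcal{C}[X,X]$. For slices $X,Y$, the presheaf $(X\wedge Y)(-):\mathsf{Slice}^{op}\to\mathsf{Set}$ is defined by $(X\wedge Y)(Z):=\mathcal{P}(\mathcal{C}[Z,X]\cap\mathcal{C}[Z,Y])$ and, for $U:Z'\to Z$, $(X\wedge Y)(U):C\mapsto C\cap U$. *)

From Stdlib Require Import Reals.
From mathcomp Require Import all_boot all_classical topology.
Set Implicit Arguments. Unset Strict Implicit. Unset Printing Implicit Defensive.
Local Open Scope classical_set_scope.

Section Causal.
(* M : the spacetime (as a topological space);
   Curve : the future-directed causal curves, each given by a representative
   path mu c defined on the interval iota c. *)
Variables (M : topologicalType) (Curve : Type)
          (iota : Curve -> set R) (mu : Curve -> R -> M).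

Definition is_interval (I : set R) : Prop :=
  forall a b x, I a -> I b -> Rle a x -> Rle x b -> I x.

Definition causal_prec (x y : M) : Prop :=
  x = y \/ exists c a b, iota c a /\ iota c b /\ Rle a b /\ mu c a = x /\ mu c b = y.

Definition spacelike (A : set M) : Prop :=
  forall x y, A x -> A y -> x <> y -> ~ causal_prec x y.

Definition slice (A : set M) : Prop := closed A /\ spacelike A.

Definition Ccurves (A B : set M) : set Curve :=
  [set c | (exists q, iota c q /\ B (mu c q)) /\
           (forall q, iota c q -> B (mu c q) ->
              exists p, iota c p /\ Rle p q /\ A (mu c p))].

Definition slice_hom (X Y : set M) (S : set Curve) : Prop := S `<=` Ccurves X Y.

Definition wedge (X Y Z : set M) (C : set Curve) : Prop :=
  C `<=` Ccurves Z X `&` Ccurves Z Y.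

(* action of the presheaf X ∧ Y on U : Z' -> Z, and components S∧Y, X∧T *)
Definition wedge_map (U C : set Curve) : set Curve := C `&` U.
Definition wedge_left (S C : set Curve) : set Curve := C `&` S.
Definition wedge_right (T C : set Curve) : set Curve := C `&` T.

End Causal.

From Stdlib Require Import Reals.
From mathcomp Require Import all_boot all_classical topology.
Local Open Scope classical_set_scope.

(* Every component is an intersection of sets of curves, so naturality and
   the interchange law are commutativity/associativity of intersection; the
   only content is that the components land in the right presheaves, which
   is transitivity of "passing through A and then B" along a single curve. *)

Section Wedge.
Variables (M : topologicalType) (Curve : Type)
          (iota : Curve -> set R) (mu : Curve -> R -> M).

Lemma Ccurves_trans (Z X X' : set M) (c : Curve) :
  Ccurves iota mu Z X c -> Ccurves iota mu X X' c -> Ccurves iota mu Z X' c.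
Proof.
move=> [_ ZX] [[q [iq X'q]] XX']; split; first by exists q.
move=> q' iq' X'q'; have [p [ip [pq' Xp]]] := XX' q' iq' X'q'.
have [r [ir [rp Zr]]] := ZX p ip Xp.
by exists r; split => //; split => //; apply: Rle_trans rp pq'.
Qed.

Lemma wedge_left_hom (X X' Y Z : set M) (S C : set Curve) :
  slice_hom iota mu X X' S -> wedge iota mu X Y Z C ->
  wedge iota mu X' Y Z (wedge_left S C).
Proof.
move=> HS HC c [Cc Sc]; have [ZX ZY] := HC c Cc.
by split => //; apply: Ccurves_trans ZX (HS c Sc).
Qed.

Lemma wedge_right_hom (X Y Y' Z : set M) (T C : set Curve) :
  slice_hom iota mu Y Y' T -> wedge iota mu X Y Z C ->
  wedge iota mu X Y' Z (wedge_right T C).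
Proof.
move=> HT HC c [Cc Tc]; have [ZX ZY] := HC c Cc.
by split => //; apply: Ccurves_trans ZY (HT c Tc).
Qed.

End Wedge.

Lemma wedge_map_left (Curve : Type) (U S C : set Curve) :
  wedge_map U (wedge_left S C) = wedge_left S (wedge_map U C).
Proof. exact: setIAC. Qed.

Lemma wedge_map_right (Curve : Type) (U T C : set Curve) :
  wedge_map U (wedge_right T C) = wedge_right T (wedge_map U C).
Proof. exact: setIAC. Qed.

Lemma wedge_left_rightC (Curve : Type) (S T C : set Curve) :
  wedge_left S (wedge_right T C) = wedge_right T (wedge_left S C).
Proof. exact: setIAC. Qed.

Theorem mainTheorem5 (M : topologicalType) (Curve : Type)
  (iota : Curve -> set R) (mu : Curve -> R -> M)
  (Hiota : forall c, is_interval (iota c))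
  (X X' Y Y' : set M)
  (sX : slice iota mu X) (sX' : slice iota mu X')
  (sY : slice iota mu Y) (sY' : slice iota mu Y')
  (S T : set Curve)
  (HS : slice_hom iota mu X X' S) (HT : slice_hom iota mu Y Y' T) :
  (* (S ∧ Y)_Z : (X∧Y)(Z) -> (X'∧Y)(Z) and (X ∧ T)_Z : (X∧Y)(Z) -> (X∧Y')(Z)
     are well defined (and likewise S∧Y', X'∧T) *)
  (forall Z, slice iota mu Z -> forall C, wedge iota mu X Y Z C ->
      wedge iota mu X' Y Z (wedge_left S C)) /\
  (forall Z, slice iota mu Z -> forall C, wedge iota mu X Y Z C ->
      wedge iota mu X Y' Z (wedge_right T C)) /\
  (forall Z, slice iota mu Z -> forall C, wedge iota mu X Y' Z C ->
      wedge iota mu X' Y' Z (wedge_left S C)) /\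
  (forall Z, slice iota mu Z -> forall C, wedge iota mu X' Y Z C ->
      wedge iota mu X' Y' Z (wedge_right T C)) /\
  (* naturality of S ∧ Y *)
  (forall Z Z', slice iota mu Z -> slice iota mu Z' ->
     forall U, slice_hom iota mu Z' Z U ->
     forall C, wedge iota mu X Y Z C ->
       wedge_map U (wedge_left S C) = wedge_left S (wedge_map U C)) /\
  (* naturality of X ∧ T *)
  (forall Z Z', slice iota mu Z -> slice iota mu Z' ->
     forall U, slice_hom iota mu Z' Z U ->
     forall C, wedge iota mu X Y Z C ->
       wedge_map U (wedge_right T C) = wedge_right T (wedge_map U C)) /\
  (* interchange *)
  (forall Z, slice iota mu Z -> forall C, wedge iota mu X Y Z C ->
     wedge_left S (wedge_right T C) = wedge_right T (wedge_left S C)).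
Proof.
split; first by move=> Z _ C; apply: wedge_left_hom.
split; first by move=> Z _ C; apply: wedge_right_hom.
split; first by move=> Z _ C; apply: wedge_left_hom.
split; first by move=> Z _ C; apply: wedge_right_hom.
split; first by move=> *; apply: wedge_map_left.
split; first by move=> *; apply: wedge_map_right.
by move=> *; apply: wedge_left_rightC.
Qed.
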